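(* Let $p\in(-1,0)\cup(0,1)$, $\omega=e^{i\pi p}$, $f(x)=\frac{(x+\omega)(x-\omega^{-1})}{x^2-1}$, and $a\in\mathbb C$. The recurrent relations $$J_{N,a}(x_1,\ldots,x_{N-1},x)=2\cos\pi a\cdot J_{N-1,a}(x_1,\ldots,x_{N-1})+\sum_{i=1}^{N-1}\frac{x_i\,R_{N,a,i}(x_1,\ldots,x_{N-1})}{x+x_i},$$ where, with $X=(x_1,\ldots,x_{N-1})$ and $\hat X_i$ denoting $X$ with $x_i$ removed, $$R_{N,a,i}(X)=-i\sin\pi p\left(\prod_{j\ne i}f\!\left(\frac{x_i}{x_j}\right)-\prod_{j\ne i}f\!\left(\frac{x_j}{x_i}\right)\right)J_{N-2,a}(\hat X_i)$$ (products over $j\in\{1,\ldots,N-1\}\setminus\{i\}$), together with the initial conditions $$J_{0,a}=1,\qquad J_{1,a}(x)=2\cos\pi a,$$ define uniquely a sequence of homogeneous symmetric functions $J_{N,a}$ of $N$ variables of total degree $0$, $N=0,1,2,\ldots$; and these functions coincide with $$J_{N,a}(x_1,\ldots,x_N)=\sum_{I_+\sqcup I_-=\{1,\ldots,N\}}e^{i\pi a(\#I_--\#I_+)}\prod_{i\in I_-,\,j\in I_+}f\!\left(\frac{x_i}{x_j}\right).$$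
   Context: The sum is over ordered decompositions of $\{1,\ldots,N\}$ into two disjoint subsets $I_+,I_-$. These functions determine the breather form factors of the exponential fields in the sine/sinh-Gordon model. *)

From HB Require Import structures.
From mathcomp Require Import all_boot all_order all_algebra.
From mathcomp Require Import all_classical all_reals all_analysis.
From mathcomp Require Export complex.
Set Implicit Arguments.
Unset Strict Implicit.
Unset Printing Implicit Defensive.
Import Order.TTheory GRing.Theory Num.Theory.
Local Open Scope ring_scope.
Local Open Scope complex_scope.

Section Defs.
Variable R : realType.
Local Notation C := R[i].

Definition Cexp (z : C) : C :=
  let: a +i* b := z in (expR a * cos b) +i* (expR a * sin b).

Definition Ccos (z : C) : C := (Cexp ('i * z) + Cexp (- ('i * z))) / 2%:R.

Definition omega (p : R) : C := Cexp ('i * (pi * p)%:C).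

Definition ff (p : R) (x : C) : C :=
  (x + omega p) * (x - (omega p)^-1) / (x ^+ 2 - 1).

(* explicit formula: sum over subsets Im = I_- of {1..N}, I_+ = complement *)
Definition Jexpl (p : R) (a : C) (N : nat) (x : 'I_N -> C) : C :=
  \sum_(Im : {set 'I_N})
     Cexp ('i * (pi%:C) * a * ((#|Im|%:Z - #|~: Im|%:Z)%:~R))
     * \prod_(i in Im) \prod_(j in ~: Im) ff p (x i / x j).

Definition dropv (n : nat) (X : 'I_n.+1 -> C) (i : 'I_n.+1) : 'I_n -> C :=
  fun k => X (lift i k).

Definition snocv (n : nat) (X : 'I_n -> C) (x : C) : 'I_n.+1 -> C :=
  fun k => if unlift ord_max k is Some k' then X k' else x.

(* generic points: all coordinates nonzero, x_i^2 <> x_j^2 for i <> j,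
   so that all the expressions f(x_i/x_j), 1/(x + x_i) are defined *)
Definition generic (n : nat) (X : 'I_n -> C) : Prop :=
  (forall i, X i != 0) /\ (forall i j, i != j -> X i ^+ 2 != X j ^+ 2).

(* R_{N,a,i}(X) for N = n.+2, X of n.+1 variables, given J_{N-2} *)
Definition Rterm (p : R) (n : nat) (Jm2 : ('I_n -> C) -> C) (X : 'I_n.+1 -> C)
   (i : 'I_n.+1) : C :=
  - 'i * (sin (pi * p))%:C *
    (\prod_(j | j != i) ff p (X i / X j) - \prod_(j | j != i) ff p (X j / X i))
    * Jm2 (dropv X i).

Definition satisfies_rec (p : R) (a : C) (J : forall N, ('I_N -> C) -> C)
  : Prop :=
  (forall x : 'I_0 -> C, J 0 x = 1) /\
  (forall x : 'I_1 -> C, J 1 x = 2%:R * Ccos (pi%:C * a)) /\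
  (forall (n : nat) (X : 'I_n.+1 -> C) (x : C), generic (snocv X x) ->
     J n.+2 (snocv X x) =
       2%:R * Ccos (pi%:C * a) * J n.+1 X
       + \sum_(i < n.+1) X i * Rterm p (J n) X i / (x + X i)).

End Defs.

(* Multiplied by [\prod_i (x^2 - x_i^2)],
   the difference of the two sides of the recurrence becomes a polynomial in
   [x] of degree less than [2(N-1)]: its leading terms cancel because both
   sides tend to [2 cos(pi a) J_{N-1}] as [x -> oo].  At [x = x_k] it vanishes
   because the decompositions with [x_k] in [I_+] and in [I_-] cancel in pairs;
   at [x = -x_k] what remains of them is exactly the residue term
   [x_k R_{N,a,k}].  Having the [2(N-1)] distinct roots [+-x_k], the polynomial
   is zero. *)

From HB Require Import structures.
From mathcomp Require Import all_boot all_order all_algebra.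
From mathcomp Require Import all_classical all_reals all_analysis.
From mathcomp Require Import complex fingroup perm.
From mathcomp Require Import ring zify.
Import Order.TTheory GRing.Theory Num.Theory.
Local Open Scope ring_scope.
Local Open Scope complex_scope.

Set Implicit Arguments.
Unset Strict Implicit.
Unset Printing Implicit Defensive.

Lemma big_setC (R : Type) (idx : R) (op : Monoid.com_law idx) (I : finType)
    (A : {set I}) (F : I -> R) :
  op (\big[op/idx]_(i in A) F i) (\big[op/idx]_(i in ~: A) F i) = \big[op/idx]_i F i.
Proof.
by rewrite [RHS](bigID (mem A)) /=; apply: congr2; apply: eq_bigl => i; rewrite ?inE.
Qed.

Section LiftSets.
Variables (n : nat) (k : 'I_n.+1).

Lemma big_neq_lift (R : Type) (idx : R) (op : Monoid.com_law idx) (F : 'I_n.+1 -> R) :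
  \big[op/idx]_(j | j != k) F j = \big[op/idx]_(i < n) F (lift k i).
Proof.
rewrite (reindex_omap (lift k) (unlift k)); last first.
  by move=> j; case: unliftP => [i ->|->] //=; rewrite eqxx.
by apply: eq_bigl => i; rewrite eq_sym neq_lift liftK eqxx.
Qed.

Lemma notin_imset_lift (T : {set 'I_n}) : k \notin lift k @: T.
Proof. by apply/imsetP => -[j _ /eqP]; rewrite (negbTE (neq_lift k j)). Qed.

Lemma mem_imset_lift (T : {set 'I_n}) j : (lift k j \in lift k @: T) = (j \in T).
Proof. exact/mem_imset/lift_inj. Qed.

Lemma setC_imset_lift (T : {set 'I_n}) : ~: (lift k @: T) = k |: lift k @: ~: T.
Proof.
apply/setP => i; rewrite !inE; case: (unliftP k i) => [j ->|->].
  by rewrite !mem_imset_lift inE eq_sym (negbTE (neq_lift k j)).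
by rewrite eqxx (negbTE (notin_imset_lift T)).
Qed.

Lemma setC_setU1_imset_lift (T : {set 'I_n}) : ~: (k |: lift k @: T) = lift k @: ~: T.
Proof. by rewrite -[RHS]finset.setCK setC_imset_lift finset.setCK. Qed.

Lemma card_imset_lift (T : {set 'I_n}) : #|lift k @: T| = #|T|.
Proof. exact/card_imset/lift_inj. Qed.

Lemma card_setU1_imset_lift (T : {set 'I_n}) : #|k |: lift k @: T| = #|T|.+1.
Proof. by rewrite cardsU1 notin_imset_lift card_imset_lift. Qed.

Section BigLift.
Variables (R : Type) (idx : R) (op : Monoid.com_law idx).

Lemma big_set_lift (F : {set 'I_n.+1} -> R) :
  \big[op/idx]_S F S =
  \big[op/idx]_(T : {set 'I_n}) op (F (lift k @: T)) (F (k |: lift k @: T)).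
Proof.
pose restr (S : {set 'I_n.+1}) : {set 'I_n} := [set j | lift k j \in S].
rewrite big_split /= (bigID (fun S : {set 'I_n.+1} => k \in S)) /= Monoid.mulmC; apply: congr2.
  rewrite (reindex_onto (fun T : {set 'I_n} => lift k @: T) restr) => [|S kS].
    apply: eq_bigl => T; rewrite notin_imset_lift /=; apply/eqP/setP => j.
    by rewrite inE mem_imset_lift.
  apply/setP => i; case: (unliftP k i) => [j ->|->]; first by rewrite mem_imset_lift inE.
  by rewrite (negbTE (notin_imset_lift _)) (negbTE kS).
rewrite (reindex_onto (fun T : {set 'I_n} => k |: lift k @: T) restr) => [|S kS].
  apply: eq_bigl => T; rewrite setU11 /=; apply/eqP/setP => j.
  by rewrite !inE mem_imset_lift eq_sym (negbTE (neq_lift k j)).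
apply/setP => i; case: (unliftP k i) => [j ->|->].
  by rewrite in_setU1 mem_imset_lift inE eq_sym (negbTE (neq_lift k j)).
by rewrite in_setU1 eqxx kS.
Qed.

Lemma big_imset_lift (T : {set 'I_n}) (F : 'I_n.+1 -> R) :
  \big[op/idx]_(i in lift k @: T) F i = \big[op/idx]_(i in T) F (lift k i).
Proof. by rewrite big_imset // => i j _ _; apply: lift_inj. Qed.

Lemma big_setU1_imset_lift (T : {set 'I_n}) (F : 'I_n.+1 -> R) :
  \big[op/idx]_(i in k |: lift k @: T) F i = op (F k) (\big[op/idx]_(i in T) F (lift k i)).
Proof. by rewrite big_setU1 ?notin_imset_lift //= big_imset_lift. Qed.

End BigLift.
End LiftSets.

Section ComplexExp.
Variable R : realType.
Local Notation C := R[i].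

Lemma CexpD (u v : C) : Cexp (u + v) = Cexp u * Cexp v.
Proof.
case: u => a b; case: v => c d; rewrite /Cexp /= expRD cosD sinD.
by apply/eqP; rewrite eq_complex /=; apply/andP; split; apply/eqP; ring.
Qed.

Lemma Cexp0 : Cexp (0 : C) = 1.
Proof. by rewrite /Cexp /= expR0 cos0 sin0 mul1r mulr0. Qed.

Lemma two_Ccos (z : C) : 2%:R * Ccos z = Cexp ('i * z) + Cexp (- ('i * z)).
Proof. by rewrite /Ccos mulrC divfK ?pnatr_eq0. Qed.

Variable p : R.
Local Notation w := (omega p).

Lemma omegaE : w = (cos (pi * p)) +i* (sin (pi * p)).
Proof. by rewrite /omega /Cexp /= !(mul0r, mul1r, mulr0, subr0, add0r, oppr0, expR0). Qed.

Lemma omegaV : w^-1 = (cos (pi * p)) +i* (- sin (pi * p)).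
Proof.
apply: mulr1_eq; rewrite omegaE; apply/eqP; rewrite eq_complex /=.
by apply/andP; split; apply/eqP; [rewrite -(cos2Dsin2 (pi * p)) |]; ring.
Qed.

Lemma omega_neq0 : w != 0.
Proof.
apply/eqP => w0; have := cos2Dsin2 (pi * p).
move: (congr1 (@complex.Re R) w0) (congr1 (@complex.Im R) w0).
by rewrite omegaE /= => -> ->; rewrite expr0n addr0 => /eqP; rewrite eq_sym oner_eq0.
Qed.

Lemma omega_subV : w - w^-1 = 2%:R * 'i * (sin (pi * p))%:C.
Proof.
rewrite omegaV omegaE; apply/eqP; rewrite eq_complex /=.
by apply/andP; split; apply/eqP; ring.
Qed.

Lemma ff_mul_sqr (x z : C) : x != 0 -> z ^+ 2 != x ^+ 2 ->
  ff p (z / x) * ((z + x) * (z - x)) = (z + w * x) * (z - w^-1 * x).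
Proof.
move=> x0 zx; rewrite /ff; field.
by rewrite omega_neq0 x0 mulN1r subr_eq0 zx.
Qed.

Lemma ffV_mul_sqr (x z : C) : z != 0 -> z ^+ 2 != x ^+ 2 ->
  ff p (x / z) * ((z + x) * (z - x)) = (z + w^-1 * x) * (z - w * x).
Proof.
move=> z0 zx; rewrite /ff; field.
by rewrite omega_neq0 z0 mulN1r subr_eq0 eq_sym zx.
Qed.

End ComplexExp.

Section MonicQuadratics.
Variable F : idomainType.

Definition pquad (b c : F) : {poly F} := ('X + b%:P) * ('X - c%:P).

Lemma horner_pquad b c z : (pquad b c).[z] = (z + b) * (z - c).
Proof. by rewrite !hornerE. Qed.

Lemma horner_pquadN b c z : (pquad b c).[- z] = (pquad c b).[z].
Proof. by rewrite !horner_pquad; ring. Qed.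

Lemma pquad_monic b c : pquad b c \is monic.
Proof. by rewrite monicMl ?monicXaddC ?monicXsubC. Qed.

Lemma size_pquad b c : size (pquad b c) = 3%N.
Proof.
by rewrite size_monicM ?monicXaddC ?size_XaddC ?size_XsubC // -size_poly_eq0 size_XsubC.
Qed.

Lemma size_prod_monic (I : finType) (P : pred I) (Q : I -> {poly F}) d :
    (forall i, Q i \is monic) -> (forall i, size (Q i) = d.+1) ->
  size (\prod_(i | P i) Q i) = (#|P| * d).+1.
Proof.
move=> Qmonic Qsize; rewrite size_prod => [|i _]; last exact: monic_neq0.
rewrite (eq_bigr (fun=> d.+1)) => [|i _]; last exact: Qsize.
by rewrite sum_nat_const; lia.
Qed.

Lemma size_sub_monic (q r : {poly F}) d : q \is monic -> r \is monic ->
  size q = d.+1 -> size r = d.+1 -> (size (q - r)%R <= d)%N.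
Proof.
move=> /monicP q1 /monicP r1 qd rd; apply/leq_sizeP => i di; rewrite coefB.
have [->|ne] := eqVneq i d.
  by move: q1 r1; rewrite /lead_coef qd rd /= => -> ->; rewrite subrr.
by rewrite !nth_default ?subrr // ?qd ?rd; lia.
Qed.

Lemma monic_prod_pquad (I : finType) (P : pred I) (b c : I -> F) :
  \prod_(i | P i) pquad (b i) (c i) \is monic.
Proof. by apply: monic_prod => i _; apply: pquad_monic. Qed.

Lemma size_prod_pquad (I : finType) (P : pred I) (b c : I -> F) :
  size (\prod_(i | P i) pquad (b i) (c i)) = (#|P|.*2).+1.
Proof.
rewrite -muln2; apply: size_prod_monic => i; [exact: pquad_monic | exact: size_pquad].
Qed.

Lemma size_pquad_setC_sub (I : finType) (A : {set I}) (b1 c1 b2 c2 b3 c3 : I -> F) :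
  (size (\prod_(i in A) pquad (b1 i) (c1 i) * \prod_(i in ~: A) pquad (b2 i) (c2 i)
         - \prod_i pquad (b3 i) (c3 i))%R <= #|I|.*2)%N.
Proof.
have size_in (B : {set I}) (b c : I -> F) :
  size (\prod_(i in B) pquad (b i) (c i)) = (#|B|.*2).+1 by exact: size_prod_pquad.
have size_all (b c : I -> F) :
  size (\prod_i pquad (b i) (c i)) = (#|I|.*2).+1 by exact: size_prod_pquad.
apply: size_sub_monic; rewrite ?size_all ?monicMl ?monic_prod_pquad //.
by rewrite size_monicM ?monic_neq0 ?monic_prod_pquad // !size_in -(cardsC A); lia.
Qed.

End MonicQuadratics.

Lemma poly_eq0_pm_roots (F : numFieldType) m (P : {poly F}) (x : 'I_m -> F) :
    (size P <= m.*2)%N -> (forall i, x i != 0) ->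
    (forall i j, i != j -> x i ^+ 2 != x j ^+ 2) ->
    (forall i, root P (x i)) -> (forall i, root P (- x i)) ->
  P = 0.
Proof.
move=> sizeP x0 xd rootP rootN; apply/eqP; apply: contraT => P0.
pose rs := map x (enum 'I_m) ++ map (fun i => - x i) (enum 'I_m).
have x_inj : injective x.
  by move=> i j e; apply/eqP; apply: contraT => /xd; rewrite e eqxx.
have uniq_rs : uniq rs.
  rewrite cat_uniq (map_inj_uniq x_inj) (map_inj_uniq (inj_comp oppr_inj x_inj)).
  rewrite enum_uniq /= andbT; apply/hasPn => _ /mapP [i _ ->]; apply/mapP => -[j _ e].
  case: (eqVneq i j) e => [<- e | /xd + e]; last by rewrite -e sqrrN eqxx.
  have : x i *+ 2 == 0 by rewrite mulr2n -{1}e addNr.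
  by rewrite -mulr_natr mulf_eq0 pnatr_eq0 orbF (negbTE (x0 i)).
have roots_rs : all (root P) rs.
  by rewrite all_cat; apply/andP; split; apply/allP => _ /mapP [i _ ->].
have := max_poly_roots P0 roots_rs uniq_rs.
by rewrite size_cat !size_map -enumT size_enum_ord addnn ltnNge sizeP.
Qed.

Section ExplicitFormula.
Variables (R : realType) (p : R) (a : R[i]).
Local Notation C := R[i].

Definition phase (d : int) : C := Cexp ('i * pi%:C * a * d%:~R).

Definition imbalance n (S : {set 'I_n}) : int := #|S|%:Z - #|~: S|%:Z.

Definition cross_prod n (x : 'I_n -> C) (S : {set 'I_n}) : C :=
  \prod_(i in S) \prod_(j in ~: S) ff p (x i / x j).

Lemma JexplE n (x : 'I_n -> C) : Jexpl p a x = \sum_S phase (imbalance S) * cross_prod x S.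
Proof. by []. Qed.

Lemma phaseD d e : phase (d + e) = phase d * phase e.
Proof. by rewrite /phase intrD mulrDr CexpD. Qed.

Lemma phase0 : phase 0 = 1.
Proof. by rewrite /phase mulr0 Cexp0. Qed.

Lemma phase1N1 : phase 1 * phase (-1) = 1.
Proof. by rewrite -phaseD addrN phase0. Qed.

Lemma two_Ccos_phase : 2%:R * Ccos (pi%:C * a) = phase 1 + phase (-1).
Proof. by rewrite two_Ccos /phase mulr1 mulrN1 !mulrA. Qed.

Lemma imbalance_imset_lift n (k : 'I_n.+1) (T : {set 'I_n}) :
  imbalance (lift k @: T) = imbalance T - 1.
Proof.
rewrite /imbalance setC_imset_lift card_setU1_imset_lift card_imset_lift -addn1 PoszD.
ring.
Qed.

Lemma imbalance_setU1_imset_lift n (k : 'I_n.+1) (T : {set 'I_n}) :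
  imbalance (k |: lift k @: T) = imbalance T + 1.
Proof.
rewrite /imbalance setC_setU1_imset_lift card_setU1_imset_lift card_imset_lift -addn1 PoszD.
ring.
Qed.

Lemma cross_prod_imset_lift n (x : 'I_n.+1 -> C) (k : 'I_n.+1) (T : {set 'I_n}) :
  cross_prod x (lift k @: T) =
  \prod_(i in T) ff p (dropv x k i / x k) * cross_prod (dropv x k) T.
Proof.
rewrite /cross_prod setC_imset_lift big_imset_lift.
by under eq_bigr => i _ do rewrite big_setU1_imset_lift; rewrite big_split.
Qed.

Lemma cross_prod_setU1_imset_lift n (x : 'I_n.+1 -> C) (k : 'I_n.+1) (T : {set 'I_n}) :
  cross_prod x (k |: lift k @: T) =
  \prod_(j in ~: T) ff p (x k / dropv x k j) * cross_prod (dropv x k) T.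
Proof.
rewrite /cross_prod setC_setU1_imset_lift big_setU1_imset_lift.
rewrite (big_imset_lift k _ (~: T) (fun j => ff p (x k / x j))); congr (_ * _).
by apply: eq_bigr => i _; rewrite big_imset_lift.
Qed.

Lemma Jexpl_lift n (x : 'I_n.+1 -> C) (k : 'I_n.+1) :
  Jexpl p a x = \sum_(T : {set 'I_n})
    (phase (imbalance T - 1) * \prod_(i in T) ff p (dropv x k i / x k)
     + phase (imbalance T + 1) * \prod_(j in ~: T) ff p (x k / dropv x k j))
    * cross_prod (dropv x k) T.
Proof.
rewrite JexplE (big_set_lift k); apply: eq_bigr => T _ /=.
rewrite cross_prod_imset_lift cross_prod_setU1_imset_lift.
by rewrite imbalance_imset_lift imbalance_setU1_imset_lift; ring.
Qed.

Lemma big_set_ord0 (F : {set 'I_0} -> C) : \sum_S F S = F finset.set0.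
Proof. by apply: big_pred1 => S /=; apply/esym/eqP/setP => -[]. Qed.

Lemma imbalance_set0_ord0 : imbalance (finset.set0 : {set 'I_0}) = 0.
Proof. by rewrite /imbalance cards0 finset.setC0 cardsT card_ord. Qed.

Lemma Jexpl0 (x : 'I_0 -> C) : Jexpl p a x = 1.
Proof. by rewrite JexplE big_set_ord0 imbalance_set0_ord0 phase0 /cross_prod big_ord0 mulr1. Qed.

Lemma Jexpl1 (x : 'I_1 -> C) : Jexpl p a x = 2%:R * Ccos (pi%:C * a).
Proof.
rewrite (Jexpl_lift _ ord0) big_set_ord0 imbalance_set0_ord0 /cross_prod !big_ord0.
by rewrite two_Ccos_phase; ring.
Qed.

Lemma Jexpl_perm n (s : 'S_n) (x : 'I_n -> C) :
  Jexpl p a (fun k => x (s k)) = Jexpl p a x.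
Proof.
rewrite !JexplE [RHS](reindex_inj (imset_inj (@perm_inj _ s))) /=.
apply: eq_bigr => S _; congr (_ * _).
  have cardS : #|s @: S| = #|S| by rewrite card_imset //; apply: perm_inj.
  have cardCS : #|~: (s @: S)| = #|~: S|.
    by have := cardsC (s @: S); have := cardsC S; rewrite cardS; lia.
  by rewrite /imbalance cardS cardCS.
rewrite /cross_prod big_imset /= => [|i j _ _]; last exact: perm_inj.
apply: eq_bigr => i _; rewrite [RHS](reindex_inj (@perm_inj _ s)).
by apply: eq_bigl => j; rewrite !inE mem_imset //; apply: perm_inj.
Qed.

Lemma Jexpl_scale n (lam : C) (x : 'I_n -> C) : lam != 0 ->
  Jexpl p a (fun k => lam * x k) = Jexpl p a x.
Proof.
move=> lam0; rewrite !JexplE; apply: eq_bigr => S _; congr (_ * _).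
apply: eq_bigr => i _; apply: eq_bigr => j _.
by rewrite invfM mulrACA mulfV // mul1r.
Qed.

End ExplicitFormula.

Section Residues.
Variables (R : realType) (p : R) (a : R[i]) (n : nat) (X : 'I_n.+1 -> R[i]).
Hypothesis X_neq0 : forall i, X i != 0.
Hypothesis X_sqr_inj : forall i j, i != j -> X i ^+ 2 != X j ^+ 2.
Local Notation C := R[i].
Local Notation w := (omega p).

Definition dq j : {poly C} := pquad (X j) (X j).
Definition nq j : {poly C} := pquad (w * X j) (w^-1 * X j).
Definition mq j : {poly C} := pquad (w^-1 * X j) (w * X j).

Lemma dqN j z : (dq j).[- z] = (dq j).[z]. Proof. exact: horner_pquadN. Qed.
Lemma nqN j z : (nq j).[- z] = (mq j).[z]. Proof. exact: horner_pquadN. Qed.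
Lemma mqN j z : (mq j).[- z] = (nq j).[z]. Proof. exact: horner_pquadN. Qed.

Lemma ff_dq_nq j z : z ^+ 2 != X j ^+ 2 -> ff p (z / X j) * (dq j).[z] = (nq j).[z].
Proof. by rewrite !horner_pquad; apply: ff_mul_sqr. Qed.

Lemma ff_dq_mq j z : z != 0 -> z ^+ 2 != X j ^+ 2 ->
  ff p (X j / z) * (dq j).[z] = (mq j).[z].
Proof. by rewrite !horner_pquad; apply: ffV_mul_sqr. Qed.

Lemma nq_self k : (nq k).[X k] = X k ^+ 2 * (w - w^-1).
Proof. by rewrite horner_pquad; field; rewrite omega_neq0. Qed.

Lemma mq_self k : (mq k).[X k] = - (nq k).[X k].
Proof. by rewrite !horner_pquad; field; rewrite omega_neq0. Qed.

Definition summand (T : {set 'I_n.+1}) : C := phase a (imbalance T) * cross_prod p X T.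

Definition numer (T : {set 'I_n.+1}) (z : C) : C :=
  phase a 1 * (\prod_(i in T) (dq i).[z] * \prod_(j in ~: T) (nq j).[z])
  + phase a (-1) * (\prod_(i in T) (mq i).[z] * \prod_(j in ~: T) (dq j).[z]).

Definition residue k : C := X k * Rterm p (@Jexpl R p a n) X k.

(* Left minus right side of the recurrence at [x = 'X], cleared of denominators
   by [\prod_j (x^2 - x_j^2)], with [2 cos(pi a) J_{N-1}] spread over the summands. *)
Definition defect : {poly C} :=
  \sum_T summand T *:
    (phase a 1 *: (\prod_(i in T) dq i * \prod_(j in ~: T) nq j - \prod_i dq i)
     + phase a (-1) *: (\prod_(i in T) mq i * \prod_(j in ~: T) dq j - \prod_i dq i))
  - \sum_k residue k *: (('X - (X k)%:P) * \prod_(j | j != k) dq j).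

Lemma horner_defect z : defect.[z] =
  \sum_T summand T * numer T z
  - (phase a 1 + phase a (-1)) * Jexpl p a X * \prod_i (dq i).[z]
  - \sum_k residue k * ((z - X k) * \prod_(j | j != k) (dq j).[z]).
Proof.
rewrite hornerD hornerN !horner_sum JexplE mulr_sumr mulr_suml -sumrB.
congr (_ - _); last by apply: eq_bigr => k _; rewrite hornerZ hornerM horner_prod hornerXsubC.
apply: eq_bigr => T _; rewrite hornerZ hornerD !hornerZ !hornerD !hornerN !hornerM !horner_prod.
by rewrite /summand /numer; ring.
Qed.

Lemma size_defect : (size defect <= n.+1.*2)%N.
Proof.
have size_sum_le (I : finType) (F : I -> {poly C}) m :
    (forall i, size (F i) <= m)%N -> (size (\sum_i F i)%R <= m)%N.
  by move=> Fm; apply: leq_trans (size_sum _ _ _) _; apply/bigmax_leqP => i _.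
have size_pole k : size (('X - (X k)%:P) * \prod_(j | j != k) dq j) = n.+1.*2.
  rewrite /dq size_monicM ?monicXsubC ?monic_neq0 ?monic_prod_pquad //.
  by rewrite size_XsubC size_prod_pquad cardC1 card_ord; lia.
apply: leq_trans (size_polyD _ _) _; rewrite geq_max size_polyN.
apply/andP; split; last first.
  by apply: size_sum_le => k; rewrite (leq_trans (size_scale_leq _ _)) ?size_pole.
apply: size_sum_le => T; apply: leq_trans (size_scale_leq _ _) _.
apply: leq_trans (size_polyD _ _) _; rewrite geq_max.
have := size_pquad_setC_sub T; rewrite card_ord => size_term.
by apply/andP; split; apply: leq_trans (size_scale_leq _ _) _; apply: size_term.
Qed.

Section AtRoots.
Variables (k : 'I_n.+1) (z : C).
Hypothesis dq_z : forall i, (dq i).[z] = (dq i).[X k].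

Lemma ff_dq_mq_lift (i : 'I_n) :
  ff p (X (lift k i) / X k) * (dq (lift k i)).[z] = (mq (lift k i)).[X k].
Proof. by rewrite dq_z ff_dq_mq // X_sqr_inj // neq_lift. Qed.

Lemma ff_dq_nq_lift (j : 'I_n) :
  ff p (X k / X (lift k j)) * (dq (lift k j)).[z] = (nq (lift k j)).[X k].
Proof. by rewrite dq_z ff_dq_nq // X_sqr_inj // neq_lift. Qed.

(* Splitting on whether [k] lies in [I_-]: since [(dq k).[z] = 0], each
   decomposition contributes a single term, and the [ff] factors involving
   [x_k] are absorbed into the quadratics. *)
Lemma numer_sum_lift : \sum_T summand T * numer T z =
  \sum_(T : {set 'I_n}) phase a (imbalance T) * cross_prod p (dropv X k) T *
    ((nq k).[z] * \prod_(i in T) (mq (lift k i)).[X k]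
       * \prod_(j in ~: T) (nq (lift k j)).[z]
     + (mq k).[z] * \prod_(i in T) (mq (lift k i)).[z]
       * \prod_(j in ~: T) (nq (lift k j)).[X k]).
Proof.
have dq_k : (dq k).[z] = 0 by rewrite dq_z horner_pquad subrr mulr0.
rewrite (big_set_lift k); apply: eq_bigr => T _ /=.
rewrite /summand /numer imbalance_imset_lift imbalance_setU1_imset_lift.
rewrite cross_prod_imset_lift cross_prod_setU1_imset_lift.
rewrite setC_imset_lift setC_setU1_imset_lift !big_imset_lift !big_setU1_imset_lift /= dq_k.
have <- : \prod_(i in T) ff p (dropv X k i / X k) * \prod_(i in T) (dq (lift k i)).[z] =
          \prod_(i in T) (mq (lift k i)).[X k].
  by rewrite -big_split; apply: eq_bigr => i _; apply: ff_dq_mq_lift.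
have <- : \prod_(j in ~: T) ff p (X k / dropv X k j) * \prod_(j in ~: T) (dq (lift k j)).[z] =
          \prod_(j in ~: T) (nq (lift k j)).[X k].
  by rewrite -big_split; apply: eq_bigr => j _; apply: ff_dq_nq_lift.
by rewrite !phaseD; ring: (phase1N1 a).
Qed.

Lemma residue_sum_lift :
  \sum_i residue i * ((z - X i) * \prod_(j | j != i) (dq j).[z]) =
  residue k * ((z - X k) * \prod_(j | j != k) (dq j).[z]).
Proof.
rewrite [LHS](bigD1 k) //= [X in _ + X]big1 ?addr0 // => i ik.
by rewrite (bigD1 k) 1?eq_sym //= dq_z horner_pquad subrr !(mul0r, mulr0).
Qed.

Lemma prod_dq_root : \prod_i (dq i).[z] = 0.
Proof. by rewrite (bigD1 k) //= dq_z horner_pquad subrr mulr0 mul0r. Qed.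

End AtRoots.

Lemma defect_root k : defect.[X k] = 0.
Proof.
rewrite horner_defect (residue_sum_lift (k := k)) // (prod_dq_root (k := k)) //.
rewrite (numer_sum_lift (k := k)) // big1 => [|T _]; last by rewrite mq_self; ring.
by rewrite subrr !(mul0r, mulr0, subr0).
Qed.

Lemma defect_opp_root k : defect.[- X k] = 0.
Proof.
have dq_opp i : (dq i).[- X k] = (dq i).[X k] by apply: dqN.
rewrite horner_defect (residue_sum_lift (k := k)) // (prod_dq_root (k := k)) // mulr0 subr0.
rewrite (numer_sum_lift (k := k)) //.
pose K := (mq k).[X k] * \prod_(i < n) (mq (lift k i)).[X k]
            + (nq k).[X k] * \prod_(i < n) (nq (lift k i)).[X k].
rewrite (eq_bigr (fun T => phase a (imbalance T) * cross_prod p (dropv X k) T * K)) => [|T _].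
  rewrite -mulr_suml -JexplE /residue /Rterm !big_neq_lift /K /=.
  rewrite (eq_bigr _ (fun i _ => esym (ff_dq_mq_lift dq_opp i))).
  rewrite (eq_bigr _ (fun i _ => esym (ff_dq_nq_lift dq_opp i))) !big_split /=.
  rewrite (eq_bigr _ (fun (j : 'I_n) _ => dq_opp (lift k j))).
  by rewrite mq_self nq_self omega_subV; ring.
rewrite nqN mqN (eq_bigr _ (fun j _ => nqN (lift k j) (X k))).
by rewrite (eq_bigr _ (fun i _ => mqN (lift k i) (X k))) -!mulrA !big_setC.
Qed.

Lemma defect_eq0 : defect = 0.
Proof.
apply: (poly_eq0_pm_roots size_defect X_neq0 X_sqr_inj) => k; rewrite /root.
  by rewrite defect_root.
by rewrite defect_opp_root.
Qed.

Lemma Jexpl_lift_partial_fractions z : z != 0 -> (forall i, z ^+ 2 != X i ^+ 2) ->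
  \sum_(T : {set 'I_n.+1})
    (phase a (imbalance T - 1) * \prod_(i in T) ff p (X i / z)
     + phase a (imbalance T + 1) * \prod_(j in ~: T) ff p (z / X j)) * cross_prod p X T
  = (phase a 1 + phase a (-1)) * Jexpl p a X + \sum_i residue i / (z + X i).
Proof.
move=> z0 zX; set D := \prod_i (dq i).[z].
have D_neq0 : D != 0.
  by apply/prodf_neq0 => i _; rewrite horner_pquad mulrC -subr_sqr subr_eq0.
have numer_D T : summand T * numer T z =
    (phase a (imbalance T - 1) * \prod_(i in T) ff p (X i / z)
     + phase a (imbalance T + 1) * \prod_(j in ~: T) ff p (z / X j)) * cross_prod p X T * D.
  rewrite /summand /numer.
  have <- : \prod_(j in ~: T) ff p (z / X j) * \prod_(j in ~: T) (dq j).[z] =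
            \prod_(j in ~: T) (nq j).[z].
    by rewrite -big_split; apply: eq_bigr => j _; apply: ff_dq_nq.
  have <- : \prod_(i in T) ff p (X i / z) * \prod_(i in T) (dq i).[z] =
            \prod_(i in T) (mq i).[z].
    by rewrite -big_split; apply: eq_bigr => i _; apply: ff_dq_mq.
  by rewrite /D -(big_setC _ T) /= !phaseD; ring: (phase1N1 a).
have residue_D i : residue i * ((z - X i) * \prod_(j | j != i) (dq j).[z]) =
    residue i / (z + X i) * D.
  have zXi : z + X i != 0.
    by apply: contra (zX i) => /eqP/(canRL (addrK _))->; rewrite sub0r sqrrN.
  by rewrite /D [in RHS](bigD1 i) //= [(dq i).[z]]horner_pquad; field.
have := horner_defect z; rewrite defect_eq0 horner0 (eq_bigr _ (fun T _ => numer_D T)).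
rewrite (eq_bigr _ (fun i _ => residue_D i)) -!mulr_suml -/D => /esym/eqP.
rewrite -mulrBl -mulrBl mulf_eq0 (negbTE D_neq0) orbF subr_eq0 subr_eq => /eqP ->.
exact: addrC.
Qed.

End Residues.

Section Points.
Variable R : realType.
Local Notation C := R[i].

Lemma snocv_lift n (X : 'I_n -> C) z i : snocv X z (lift ord_max i) = X i.
Proof. by rewrite /snocv liftK. Qed.

Lemma snocv_max n (X : 'I_n -> C) z : snocv X z ord_max = z.
Proof. by rewrite /snocv unlift_none. Qed.

Lemma dropv_snocv n (X : 'I_n -> C) z : dropv (snocv X z) ord_max = X.
Proof. by apply: funext => i; rewrite /dropv snocv_lift. Qed.

Lemma snocv_dropv n (x : 'I_n.+1 -> C) : snocv (dropv x ord_max) (x ord_max) = x.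
Proof. by apply: funext => i; rewrite /snocv; case: unliftP => [j ->|->]. Qed.

Lemma generic_snocv n (X : 'I_n -> C) z : generic (snocv X z) ->
  [/\ generic X, z != 0 & forall i, z ^+ 2 != X i ^+ 2].
Proof.
move=> [x_neq0 x_sqr_inj]; split.
- split=> [i|i j ij]; first by have := x_neq0 (lift ord_max i); rewrite snocv_lift.
  have := x_sqr_inj (lift ord_max i) (lift ord_max j); rewrite !snocv_lift; apply.
  by rewrite (inj_eq (@lift_inj _ ord_max)).
- by have := x_neq0 ord_max; rewrite snocv_max.
- move=> i; have := x_sqr_inj ord_max (lift ord_max i).
  by rewrite snocv_max snocv_lift; apply; apply: neq_lift.
Qed.

Lemma generic_dropv n (x : 'I_n.+1 -> C) k : generic x -> generic (dropv x k).
Proof.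
move=> [x_neq0 x_sqr_inj]; split=> [i|i j ij]; first exact: x_neq0.
by apply: x_sqr_inj; rewrite (inj_eq (@lift_inj _ k)).
Qed.

End Points.

Section Recurrence.
Variables (R : realType) (p : R) (a : R[i]).
Local Notation C := R[i].

Lemma Jexpl_rec n (X : 'I_n.+1 -> C) z : generic (snocv X z) ->
  Jexpl p a (snocv X z) =
    2%:R * Ccos (pi%:C * a) * Jexpl p a X
    + \sum_(i < n.+1) X i * Rterm p (@Jexpl R p a n) X i / (z + X i).
Proof.
move=> /generic_snocv [[X_neq0 X_sqr_inj] z_neq0 z_sqr].
rewrite (Jexpl_lift p a _ ord_max) dropv_snocv snocv_max two_Ccos_phase.
exact: Jexpl_lift_partial_fractions.
Qed.

Lemma Jexpl_satisfies_rec : satisfies_rec p a (@Jexpl R p a).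
Proof. by split; [exact: Jexpl0 | split; [exact: Jexpl1 | exact: Jexpl_rec]]. Qed.

Lemma satisfies_rec_unique (J : forall N, ('I_N -> C) -> C) : satisfies_rec p a J ->
  forall N (x : 'I_N -> C), generic x -> J N x = Jexpl p a x.
Proof.
move=> [J0 [J1 Jrec]].
suff J_eq N : (forall x : 'I_N -> C, generic x -> J N x = Jexpl p a x) /\
              (forall x : 'I_N.+1 -> C, generic x -> J N.+1 x = Jexpl p a x).
  by move=> N x; case: (J_eq N) => + _; apply.
elim: N => [|N [IH IHS]]; first by split=> x _; rewrite ?J0 ?Jexpl0 ?J1 ?Jexpl1.
split=> // x; rewrite -(snocv_dropv x) => gen_x.
have [gen_X _ _] := generic_snocv gen_x.
rewrite Jrec // Jexpl_rec // IHS //; congr (_ + _); apply: eq_bigr => i _.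
by rewrite /Rterm IH //; apply: generic_dropv.
Qed.

End Recurrence.

Unset Implicit Arguments.
Set Strict Implicit.
Set Printing Implicit Defensive.

Theorem theorem4 (R : realType) (p : R) (a : R[i]) :
  (-1 < p < 0 \/ 0 < p < 1) ->
  satisfies_rec p a (@Jexpl R p a) /\
  (forall (N : nat) (s : 'S_N) (x : 'I_N -> R[i]),
      Jexpl p a (fun k => x (s k)) = Jexpl p a x) /\
  (forall (N : nat) (lam : R[i]) (x : 'I_N -> R[i]), lam != 0 ->
      Jexpl p a (fun k => lam * x k) = Jexpl p a x) /\
  (forall J : forall N, ('I_N -> R[i]) -> R[i],
      satisfies_rec p a J ->
      forall (N : nat) (x : 'I_N -> R[i]), generic x -> J N x = Jexpl p a x).
Proof.
move=> _; split; first exact: Jexpl_satisfies_rec.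
split; first exact: Jexpl_perm.
split; first exact: Jexpl_scale.
exact: satisfies_rec_unique.
Qed.
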